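(* Let $k$ be an uncountable algebraically closed field of characteristic $p>0$. Let $f\in k[[x_1,\dots,x_n]]$ be such that $k[[x_1,\dots,x_n]]/(f)$ is an $(n-1)$-dimensional hypersurface ring, and let $g\in k[[x_1,\dots,x_n]]$ be a formal power series with $g\neq 0$, $g(0)=0$ and $g\notin k\cdot f$. Then there is a subset $\Lambda\subseteq k$, dense in the Zariski topology of $k$, such that for every $\alpha\in\Lambda$, $$\operatorname{e}_{HK}\Big(\frac{k[[x_1,\dots,x_n]]}{(f+\alpha g)}\Big)\le \operatorname{e}_{HK}\Big(\frac{k[[x_1,\dots,x_n]]}{(f)}\Big).$$ (Equivalently, with $R=k[[x_1,\dots,x_n]][t]/(f+tg)$, $t_\alpha=t-\alpha$ and $\mathfrak m_\alpha=(x_1,\dots,x_n,t-\alpha)$, one has $\operatorname{e}_{HK}((R/t_\alpha R)_{\mathfrak m_\alpha})\le \operatorname{e}_{HK}((R/tR)_{\mathfrak m_0})$ for all $\alpha\in\Lambda$.)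
   Context: For a $d$-dimensional Noetherian local ring $(A,\mathfrak m)$ of characteristic $p>0$, $\mathfrak m^{[q]}=(a^q:a\in\mathfrak m)$ for $q=p^e$, and $\operatorname{e}_{HK}(A)=\lim_{q\to\infty}\lambda(A/\mathfrak m^{[q]})/q^d$, where $\lambda$ denotes length. *)

From HB Require Import structures.
From mathcomp Require Import all_boot all_order all_algebra.
From mathcomp Require Import classical_sets topology normedtype sequences.
From mathcomp Require Import Rstruct Rstruct_topology.
Set Implicit Arguments.
Unset Strict Implicit.
Unset Printing Implicit Defensive.
Import Order.TTheory GRing.Theory Num.Theory.
Local Open Scope ring_scope.

(* A formal power series in k[[x_1,...,x_n]], given by its coefficient
   function on exponent vectors (a : 'I_n -> nat encodes x^a). *)
Definition pseries (k : Type) (n : nat) := {ffun 'I_n -> nat} -> k.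

Section HK.
Variables (k : fieldType) (n : nat).

Definition ps_const (f : pseries k n) : k := f [ffun _ => 0%N].

Definition ps_add_scale (f g : pseries k n) (a : k) : pseries k n :=
  fun m => f m + a * g m.

(* Monomials x^b surviving in k[[x]]/(x_1^q,...,x_n^q) : exponents b_i < q. *)
Definition trunc_mon (q : nat) := {ffun 'I_n -> 'I_q}.

(* Matrix whose row indexed by the monomial x^a is the image of x^a * f in
   k[[x]]/(x_1^q,...,x_n^q) = k[x]/(x_1^q,...,x_n^q), written in the monomial
   basis; its row space is the ideal generated by f in that algebra. *)
Definition frob_mx (f : pseries k n) (q : nat) : 'M[k]_(#|trunc_mon q|) :=
  \matrix_(i, j)
    let a := @enum_val (trunc_mon q) predT i in
    let b := @enum_val (trunc_mon q) predT j in
    if [forall t, a t <= b t]%N then f [ffun t => (b t - a t)%N] else 0.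

(* lambda( k[[x]]/(f) / m^[q] ) = dim_k k[[x]]/(f, x_1^q, ..., x_n^q)
   (for q a power of char k, m^[q] is generated by the images of the x_i^q). *)
Definition hk_length (f : pseries k n) (q : nat) : nat :=
  (#|trunc_mon q| - \rank (frob_mx f q))%N.

(* e_HK of k[[x]]/(f), a ring of dimension d = n - 1, in characteristic p:
   lim_{e -> oo} lambda(A / m^[p^e]) / (p^e)^d. *)
Definition eHK (p : nat) (f : pseries k n) : Rdefinitions.R :=
  limn (fun e : nat =>
          ((hk_length f (p ^ e))%:R / ((p ^ e)%:R ^+ n.-1)) : Rdefinitions.R).

(* Zariski density in the affine line k: the only polynomial vanishing on L
   is 0 (i.e. the Zariski closure V(I(L)) of L is all of k). *)
Definition zariski_dense (L : k -> Prop) : Prop :=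
  forall P : {poly k}, (forall a, L a -> root P a) -> P = 0.

End HK.

Definition uncountable (T : Type) : Prop :=
  ~ exists s : nat -> T, forall x, exists m, s m = x.

From HB Require Import structures.
From mathcomp Require Import all_boot all_order all_algebra.
From mathcomp Require Import classical_sets topology normedtype sequences.
From mathcomp Require Import Rstruct Rstruct_topology.
From mathcomp Require Import zify boolp.
Set Implicit Arguments.
Unset Strict Implicit.
Unset Printing Implicit Defensive.
Import Order.TTheory GRing.Theory Num.Theory.
Local Open Scope ring_scope.

(* The matrix for f + a g is
   affine in a, so its rank is at least the rank for f unless a is a root of a
   nonzero polynomial (the determinant of a maximal nonsingular minor, with a as
   the variable).  As k is uncountable, the a avoiding these roots for every e
   form a Zariski dense set, and for such a every term of the sequence defining
   e_HK(f + a g) is at most the corresponding term for f.  This passes to the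
   limit because the sequence for f converges: it is nondecreasing, since
   p^n l(f, q) <= l(f^p, pq) <= p l(f, pq) (k[x]/(x^[pq]) is free of rank p^n
   over k[x^p]/(x^[pq]), and the corank of A^p is at most p times that of A),
   and it is bounded, since for the lexicographically least monomial x^mu of f
   the rows indexed by the x^a with a_t < q - |mu| are independent, whence
   l(f, q) <= n |mu| q^(n-1). *)

Section TruncatedMonomials.
Variables (k : fieldType) (n q : nat).
Local Notation T := (trunc_mon n q).
Local Notation N := #|T|.

Definition mon_of (i : 'I_N) : T := @enum_val T predT i.

Lemma mon_ofK (x : T) : mon_of (enum_rank x) = x.
Proof. exact: enum_rankK. Qed.

Lemma trunc_mon_inj (x y : T) : (forall t, x t = y t :> nat) -> x = y.
Proof. by move=> E; apply/ffunP => t; apply: val_inj; apply: E. Qed.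

Lemma card_trunc_mon : N = (q ^ n)%N.
Proof. by rewrite card_ffun !card_ord. Qed.

Lemma big_mon_of (F : T -> k) : \sum_(i < N) F (mon_of i) = \sum_(c : T) F c.
Proof. by rewrite -(big_enum_val (A:=predT) F); apply: eq_bigl. Qed.

Definition monmx (F : T -> T -> k) : 'M[k]_N :=
  \matrix_(i, j) F (mon_of i) (mon_of j).

Lemma monmxE F i j : monmx F i j = F (mon_of i) (mon_of j).
Proof. by rewrite mxE. Qed.

Lemma mul_monmx F G :
  monmx F *m monmx G = monmx (fun a b => \sum_(c : T) F a c * G c b).
Proof.
apply/matrixP => i j; rewrite !mxE -big_mon_of.
by apply: eq_bigr => l _; rewrite !mxE.
Qed.

Lemma frob_mx_monmx (f : pseries k n) : frob_mx f q =
  monmx (fun a b => if [forall t, a t <= b t]%N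
                    then f [ffun t => (b t - a t)%N] else 0).
Proof. by []. Qed.

Definition shift_mx (v : 'I_n -> nat) : 'M[k]_N :=
  monmx (fun a b => ([forall t, (b t : nat) == a t + v t]%N)%:R).

Lemma eq_shift_mx u v : u =1 v -> shift_mx u = shift_mx v.
Proof.
move=> E; apply/matrixP => i j; rewrite !monmxE.
by congr (_%:R); congr nat_of_bool; apply/eq_forallb => t; rewrite E.
Qed.

Lemma mul_shift_mx u v : shift_mx u *m shift_mx v = shift_mx (fun t => u t + v t)%N.
Proof.
rewrite /shift_mx mul_monmx; apply/matrixP => i j; rewrite !monmxE.
set a := mon_of i; set b := mon_of j.
case: (pickP [pred c : T | [forall t, (c t : nat) == a t + u t]%N]) =>
    [c /= /forallP Hc | Hn].
  rewrite (bigD1 c) //= big1 ?addr0.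
    rewrite (_ : [forall t, _] = true) ?mul1r; last by apply/forallP => t; rewrite Hc.
    congr (_%:R); congr nat_of_bool; apply/eq_forallb => t.
    by rewrite (eqP (Hc t)) addnA.
  move=> x xc; case: [forall t, (x t : nat) == a t + u t]%N / forallP => Hx;
    last by rewrite mul0r.
  by case/eqP: xc; apply: trunc_mon_inj => t; rewrite (eqP (Hx t)) (eqP (Hc t)).
rewrite big1 => [|x _]; last by have := Hn x; rewrite /= => ->; rewrite mul0r.
case: [forall t, (b t : nat) == a t + (u t + v t)]%N / forallP => Hb //.
have Hx t : (a t + u t < q)%N by have := ltn_ord (b t); rewrite (eqP (Hb t)); lia.
have := Hn [ffun t => Ordinal (Hx t)]; rewrite /=.
by rewrite (_ : [forall t, _] = true) //; apply/forallP => t; rewrite ffunE.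
Qed.

Lemma shift_mx0 : shift_mx (fun=> 0%N) = 1%:M.
Proof.
apply/matrixP => i j; rewrite monmxE !mxE.
congr (_%:R); congr nat_of_bool; apply/forallP/eqP => [H|<- t]; last by rewrite addn0.
by apply/enum_val_inj/esym/trunc_mon_inj => t; rewrite (eqP (H t)) addn0.
Qed.

Lemma shift_mxC u v : shift_mx u *m shift_mx v = shift_mx v *m shift_mx u.
Proof. by rewrite !mul_shift_mx; apply: eq_shift_mx => t; rewrite addnC. Qed.

Lemma shift_mxX v i : shift_mx v ^+ i = shift_mx (fun t => i * v t)%N.
Proof.
elim: i => [|i IH]; first by rewrite expr0 (@eq_shift_mx _ (fun=> 0%N)) ?shift_mx0.
by rewrite exprS IH -mulmxE mul_shift_mx; apply: eq_shift_mx => t; rewrite mulSn.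
Qed.

(* The right-hand side is the matrix of multiplication by sum_m F m x^(d m). *)
Lemma sum_shift_mx (F : {ffun 'I_n -> nat} -> k) d : (0 < d)%N ->
  \sum_(m : T) F [ffun t => (m t : nat)] *: shift_mx (fun t => d * m t)%N =
  monmx (fun a b => if [forall t, a t <= b t]%N && [forall t, d %| b t - a t]%N
                    then F [ffun t => (b t - a t) %/ d]%N else 0).
Proof.
move=> d0; apply/matrixP => i j; rewrite summxE monmxE.
under eq_bigr do rewrite mxE monmxE.
set a := mon_of i; set b := mon_of j.
case: (pickP [pred m : T | [forall t, (b t : nat) == a t + d * m t]%N]) =>
    [m /= /forallP Hm | Hn].
  rewrite (bigD1 m) //= big1 ?addr0.
    rewrite (_ : [forall t, _] = true) ?mulr1; last by apply/forallP => t; rewrite Hm.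
    have -> : [forall t, (a t <= b t)%N] && [forall t, (d %| b t - a t)%N].
      apply/andP; split; apply/forallP => t; rewrite (eqP (Hm t)) ?leq_addr //.
      by rewrite addKn dvdn_mulr.
    by congr F; apply/ffunP => t; rewrite !ffunE (eqP (Hm t)) addKn mulKn.
  move=> x xm; case: [forall t, (b t : nat) == a t + d * x t]%N / forallP => Hx;
    last by rewrite mulr0.
  case/eqP: xm; apply: trunc_mon_inj => t; have := eqP (Hx t); rewrite (eqP (Hm t)).
  by move/addnI/eqP; rewrite eqn_pmul2l // => /eqP.
rewrite big1 => [|x _]; last by have := Hn x; rewrite /= => ->; rewrite mulr0.
case: ifP => // /andP [/forallP H1 /forallP H2].
have Hx t : ((b t - a t) %/ d < q)%N.
  by apply: leq_ltn_trans (leq_div _ _) _; have := ltn_ord (b t); lia.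
have := Hn [ffun t => Ordinal (Hx t)]; rewrite /=.
rewrite (_ : [forall t, _] = true) //; apply/forallP => t; rewrite ffunE /=.
by rewrite mulnC divnK ?H2 // subnKC ?H1.
Qed.

Lemma frob_mx_sum_shift (f : pseries k n) :
  frob_mx f q = \sum_(m : T) f [ffun t => (m t : nat)] *: shift_mx (fun t => m t).
Proof.
have -> : \sum_(m : T) f [ffun t => (m t : nat)] *: shift_mx (fun t => m t) =
          \sum_(m : T) f [ffun t => (m t : nat)] *: shift_mx (fun t => 1 * m t)%N.
  by apply: eq_bigr => m _; congr (_ *: _); apply: eq_shift_mx => t; rewrite mul1n.
rewrite sum_shift_mx // frob_mx_monmx; apply/matrixP => i j; rewrite !monmxE.
case: ifP => //= _; rewrite (_ : [forall t, _] = true);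
  last by apply/forallP => t; rewrite dvd1n.
by congr f; apply/ffunP => t; rewrite !ffunE divn1.
Qed.

End TruncatedMonomials.

(* In characteristic p this is the series f^p = sum_m f_m^p x^(p m). *)
Definition ps_frob (k : fieldType) (n p : nat) (f : pseries k n) : pseries k n :=
  fun v => if [forall t, p %| v t]%N then f [ffun t => v t %/ p]%N ^+ p else 0.

Lemma exprD_pchar_comm (R : pzRingType) (p : nat) (x y : R) :
  prime p -> p%:R = 0 :> R -> GRing.comm x y -> (x + y) ^+ p = x ^+ p + y ^+ p.
Proof.
move=> pp p0 cxy; rewrite exprDn_comm //.
case: p pp p0 => [//|p'] pp p0.
rewrite big_ord_recl big_ord_recr /= subn0 expr0 mulr1 bin0 mulr1n.
rewrite subnn expr0 mul1r binn mulr1n big1 ?add0r ?addr0 // => i _.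
have /dvdnP[c ->] : (p'.+1 %| 'C(p'.+1, bump 0 i))%N.
  by apply: prime_dvd_bin => //; rewrite /bump /=; have := ltn_ord i; lia.
by rewrite mulrnA -mulr_natr p0 mulr0.
Qed.

Lemma expr_sum_pchar_comm (R : pzRingType) (p : nat) (I : Type) (r : seq I) (x : I -> R) :
  prime p -> p%:R = 0 :> R -> (forall i j, GRing.comm (x i) (x j)) ->
  (\sum_(i <- r) x i) ^+ p = \sum_(i <- r) x i ^+ p.
Proof.
move=> pp p0 cx; elim: r => [|a r IH]; first by rewrite !big_nil expr0n; case: p pp {p0}.
by rewrite !big_cons exprD_pchar_comm ?IH //; apply: commr_sum => j _; apply: cx.
Qed.

Lemma exprZmx (k : fieldType) N (c : k) (A : 'M[k]_N) i : (c *: A) ^+ i = c ^+ i *: A ^+ i.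
Proof.
elim: i => [|i IH]; first by rewrite !expr0 scale1r.
by rewrite !exprS IH -!mulmxE -scalemxAl -scalemxAr scalerA.
Qed.

Section FrobeniusPower.
Variables (k : fieldType) (n q p : nat).
Hypothesis pchar_p : p \in [pchar k].
Local Notation N := #|trunc_mon n q|.

Lemma natmx_pchar : p%:R = 0 :> 'M[k]_N.
Proof.
apply/matrixP => i j; rewrite mulmxnE !mxE.
by rewrite -mulr_natr (pcharf0 pchar_p) mulr0.
Qed.

Lemma frob_mxX (f : pseries k n) : frob_mx f q ^+ p = frob_mx (ps_frob p f) q.
Proof.
have pp := pcharf_prime pchar_p; have p0 := prime_gt0 pp.
rewrite frob_mx_sum_shift expr_sum_pchar_comm //; last 2 first.
- exact: natmx_pchar.
- move=> x y; rewrite /GRing.comm -!mulmxE -!scalemxAl -!scalemxAr shift_mxC.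
  by rewrite !scalerA mulrC.
under eq_bigr do rewrite exprZmx shift_mxX.
rewrite (@sum_shift_mx k n q (fun v => f v ^+ p) p) // frob_mx_monmx.
apply/matrixP => i j; rewrite !monmxE /ps_frob.
case: [forall t, _ <= _]%N => //=.
under [in RHS]eq_forallb => t do rewrite ffunE.
by case: ifP => // _; congr (f _ ^+ p); apply/ffunP => t; rewrite !ffunE.
Qed.

End FrobeniusPower.

Lemma corank_exprS (k : fieldType) N (A : 'M[k]_N) i :
  (N - \rank (A ^+ i.+1) <= i.+1 * (N - \rank A))%N.
Proof.
elim: i => [|i IH]; first by rewrite expr1 mul1n.
have := mxrank_Frobenius (A ^+ i.+1) 1%:M A.
rewrite mulmx1 mul1mx mxrank1 mulmxE -exprSr => H.
have := rank_leq_row A; have := rank_leq_row (A ^+ i.+1); lia.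
Qed.

Lemma hk_length_ps_frob_le (k : fieldType) n p (f : pseries k n) q :
  p \in [pchar k] -> (hk_length (ps_frob p f) q <= p * hk_length f q)%N.
Proof.
move=> pchar_p; have := prime_gt0 (pcharf_prime pchar_p).
by rewrite /hk_length -frob_mxX //; case: p {pchar_p} => // p' _; apply: corank_exprS.
Qed.

Lemma leq_dvdn_subE (p x y : nat) : (0 < p)%N ->
  ((x <= y) && (p %| y - x))%N = ((x %% p == y %% p) && (x %/ p <= y %/ p))%N.
Proof.
move=> p0; apply/idP/idP.
  by case/andP=> xy; rewrite -eqn_mod_dvd // => /eqP ->; rewrite eqxx leq_div2r.
case/andP=> /eqP E le; have xy : (x <= y)%N.
  by rewrite (divn_eq x p) (divn_eq y p) E leq_add2r leq_mul2r le orbT.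
by rewrite xy /= -(eqn_mod_dvd p xy) E.
Qed.

Lemma divnB_eqmod (p x y : nat) : (x %% p = y %% p)%N ->
  ((y - x) %/ p = y %/ p - x %/ p)%N.
Proof.
case: p => [|p] E; first by rewrite !divn0.
by rewrite {1}(divn_eq x p.+1) {1}(divn_eq y p.+1) E subnDr -mulnBl mulnK.
Qed.

Lemma big_indicatorl (R : pzSemiRingType) (I : finType) (d : I) (e : bool) (G : I -> R) :
  \sum_(y : I) ((y == d) && e)%:R * G y = e%:R * G d.
Proof. by rewrite (bigD1 d) //= eqxx big1 ?addr0 // => y /negbTE ->; rewrite mul0r. Qed.

Lemma big_indicatorr (R : pzSemiRingType) (I : finType) (d : I) (e : bool) (G : I -> R) :
  \sum_(y : I) G y * ((y == d) && e)%:R = G d * e%:R.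
Proof. by rewrite (bigD1 d) //= eqxx big1 ?addr0 // => y /negbTE ->; rewrite mulr0. Qed.

Lemma mxrank_sum_leq (k : fieldType) m N (I : Type) (r : seq I) (M : I -> 'M[k]_(m, N)) :
  (\rank (\sum_(i <- r) M i)%R <= \sum_(i <- r) \rank (M i))%N.
Proof.
elim: r => [|a r IH]; first by rewrite !big_nil mxrank0.
by rewrite !big_cons; apply: leq_trans (mxrank_add _ _) _; apply: leq_add.
Qed.

Lemma forall_leq_dvdn_subE n (p : nat) (a b : 'I_n -> nat) : (0 < p)%N ->
  [forall t, a t <= b t]%N && [forall t, p %| b t - a t]%N =
  [forall t, a t %% p == b t %% p]%N && [forall t, a t %/ p <= b t %/ p]%N.
Proof.
move=> p0; have E t := leq_dvdn_subE (a t) (b t) p0.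
apply/andP/andP => [[/forallP H1 /forallP H2]|[/forallP H1 /forallP H2]];
  split; apply/forallP => t; have := E t; rewrite ?H1 ?H2.
- by case/esym/andP.
- by case/esym/andP.
- by case/andP.
- by case/andP.
Qed.

(* k[x]/(x^[pq]) is free over its subring k[x^p]/(x^[pq]), with basis the monomials
   x^c, c_t < p; multiplication by ps_frob p f acts blockwise on this basis. *)
Section FrobeniusBlocks.
Variables (k : fieldType) (n p q : nat).
Local Notation Tq := (trunc_mon n q).
Local Notation Tp := (trunc_mon n p).
Local Notation TQ := (trunc_mon n (p * q)).
Local Notation Nq := #|Tq|.
Local Notation NQ := #|TQ|.

Lemma trunc_divn_subproof (x : 'I_(p * q)) : (x %/ p < q)%N.
Proof.
case: p x => [|p'] x; first by case: x.
by rewrite ltn_divLR //; have := ltn_ord x; lia.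
Qed.

Lemma trunc_modn_subproof (x : 'I_(p * q)) : (x %% p < p)%N.
Proof. by case: p x => [|p'] x; [case: x | rewrite ltn_pmod]. Qed.

Definition trunc_divn (a : TQ) : Tq := [ffun t => Ordinal (trunc_divn_subproof (a t))].
Definition trunc_modn (a : TQ) : Tp := [ffun t => Ordinal (trunc_modn_subproof (a t))].

Lemma trunc_mon_decompE (x : TQ) (c : Tp) (y : Tq) :
  [forall t, (x t : nat) == p * y t + c t]%N =
  (y == trunc_divn x) && (c == trunc_modn x).
Proof.
apply/forallP/andP => [H|[/eqP -> /eqP ->] t]; last first.
  by rewrite !ffunE /=; move: (nat_of_ord (x t)) => z; rewrite mulnC -divn_eq.
split; apply/eqP/ffunP => t; apply: val_inj; rewrite ffunE /= (eqP (H t));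
  have p0 : (0 < p)%N by apply: leq_ltn_trans (ltn_ord (c t)).
  by rewrite mulnC divnMDl // divn_small ?addn0.
by rewrite mulnC modnMDl modn_small.
Qed.

Lemma eq_trunc_modn (a b : TQ) :
  (trunc_modn a == trunc_modn b) = [forall t, (a t %% p == b t %% p)%N].
Proof.
apply/eqP/forallP => [E t|H].
  by have := congr1 (fun g : Tp => nat_of_ord (g t)) E; rewrite /= !ffunE /= => ->.
by apply/ffunP => t; apply: val_inj; rewrite !ffunE /=; apply/eqP.
Qed.

Definition inflate_mx (c : Tp) : 'M[k]_(NQ, Nq) :=
  \matrix_(i, j) ([forall t, (mon_of i t : nat) == p * mon_of j t + c t]%N)%:R.

Definition deflate_mx (c : Tp) : 'M[k]_(Nq, NQ) :=
  \matrix_(i, j) ([forall t, (mon_of j t : nat) == p * mon_of i t + c t]%N)%:R.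

Lemma inflate_deflate_mxE c (M : 'M[k]_Nq) i j :
  (inflate_mx c *m M *m deflate_mx c) i j =
  ((c == trunc_modn (mon_of i)) && (c == trunc_modn (mon_of j)))%:R *
  M (enum_rank (trunc_divn (mon_of i))) (enum_rank (trunc_divn (mon_of j))).
Proof.
rewrite !mxE.
under eq_bigr => l2 _.
  rewrite !mxE.
  under eq_bigr => l1 _ do rewrite !mxE trunc_mon_decompE -{2}(enum_valK l1).
  rewrite (big_mon_of (fun y => ((y == trunc_divn (mon_of i)) &&
                                 (c == trunc_modn (mon_of i)))%:R * M (enum_rank y) l2)).
  rewrite big_indicatorl trunc_mon_decompE -{1}(enum_valK l2).
  over.
rewrite (big_mon_of (fun y => (c == trunc_modn (mon_of i))%:R *
    M (enum_rank (trunc_divn (mon_of i))) (enum_rank y) *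
    ((y == trunc_divn (mon_of j)) && (c == trunc_modn (mon_of j)))%:R)).
rewrite big_indicatorr.
by case: (c == _); case: (c == _); rewrite /= ?mul1r ?mulr1 ?mul0r ?mulr0.
Qed.

Hypothesis pchar_p : p \in [pchar k].

Lemma frob_mx_ps_frob_blocks (f : pseries k n) :
  frob_mx (ps_frob p f) (p * q) =
  \sum_(c : Tp) inflate_mx c *m map_mx (pFrobenius_aut pchar_p) (frob_mx f q) *m deflate_mx c.
Proof.
have p0 : (0 < p)%N by apply/prime_gt0/(pcharf_prime pchar_p).
apply/matrixP => i j; rewrite summxE frob_mx_monmx monmxE.
under eq_bigr do rewrite inflate_deflate_mxE.
set a := mon_of i; set b := mon_of j; set K := map_mx _ _ _ _.
rewrite (eq_bigr (fun c => ((c == trunc_modn a) && (trunc_modn a == trunc_modn b))%:R * K));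
  last by move=> c _; case: eqP => [->|]; rewrite ?eqxx //= eq_sym.
rewrite big_indicatorl /K mxE frob_mx_monmx monmxE !mon_ofK pFrobenius_autE eq_trunc_modn.
have dvdE : [forall t, p %| [ffun t => b t - a t] t]%N = [forall t, p %| b t - a t]%N.
  by apply: eq_forallb => t; rewrite ffunE.
have divE : [forall t, trunc_divn a t <= trunc_divn b t]%N =
            [forall t, a t %/ p <= b t %/ p]%N.
  by apply: eq_forallb => t; rewrite !ffunE.
have zeroX : (0 : k) ^+ p = 0 by rewrite expr0n gtn_eqF.
rewrite /ps_frob dvdE divE.
have := forall_leq_dvdn_subE (fun t => a t : nat) (fun t => b t : nat) p0.
case: (boolP [forall t, _ == _ %[mod p]]) => [/forallP modE|_]; rewrite ?mul0r ?mul1r;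
  case: [forall t, a t <= b t]%N; case: [forall t, p %| _]%N;
  case: [forall t, _ %/ p <= _]%N => //= _.
congr (f _ ^+ p); apply/ffunP => t; rewrite !ffunE divnB_eqmod //; exact/eqP/modE.
Qed.

End FrobeniusBlocks.

Section HKMonotone.
Variables (k : fieldType) (n p : nat).
Hypothesis pchar_p : p \in [pchar k].

Lemma mxrank_frob_mx_ps_frob (f : pseries k n) q :
  (\rank (frob_mx (ps_frob p f) (p * q)) <= p ^ n * \rank (frob_mx f q))%N.
Proof.
rewrite (frob_mx_ps_frob_blocks q pchar_p).
apply: leq_trans (mxrank_sum_leq _ _) _.
apply: (@leq_trans (\sum_(c <- index_enum (trunc_mon n p)) \rank (frob_mx f q))).
  apply: leq_sum => c _; apply: leq_trans (mxrankM_maxl _ _) _.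
  by apply: leq_trans (mxrankM_maxr _ _) _; rewrite mxrank_map.
by rewrite sum_nat_const -(card_trunc_mon n p).
Qed.

Lemma hk_length_ps_frob_ge (f : pseries k n) q :
  (p ^ n * hk_length f q <= hk_length (ps_frob p f) (p * q))%N.
Proof.
rewrite /hk_length mulnBr.
have -> : (p ^ n * #|trunc_mon n q| = #|trunc_mon n (p * q)|)%N.
  by rewrite !card_trunc_mon expnMn.
have := mxrank_frob_mx_ps_frob f q; lia.
Qed.

Lemma hk_length_mulp (f : pseries k n) q : (0 < n)%N ->
  (p ^ n.-1 * hk_length f q <= hk_length f (p * q))%N.
Proof.
move=> n0; have p0 := prime_gt0 (pcharf_prime pchar_p).
have := leq_trans (hk_length_ps_frob_ge f q) (hk_length_ps_frob_le f (p * q) pchar_p).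
by case: n n0 f => // n' _ f; rewrite expnS -mulnA leq_pmul2l.
Qed.

End HKMonotone.

Lemma nat_minimal (P : nat -> Prop) : (exists v, P v) ->
  exists v, P v /\ forall w, P w -> (v <= w)%N.
Proof.
move=> [v Pv]; have ex : exists v, `[< P v >] by exists v; apply/asboolP.
case: (ex_minnP ex) => m /asboolP Pm Hm; exists m; split => // w Pw.
by apply: Hm; apply/asboolP.
Qed.

Section Lex.
Variable n : nat.

Definition lex_lt (x y : 'I_n -> nat) : Prop :=
  exists j : 'I_n, (forall i : 'I_n, (i < j)%N -> x i = y i) /\ (x j < y j)%N.

Definition lex_lt_before (j : nat) (x y : 'I_n -> nat) : Prop :=
  exists i : 'I_n, (i < j)%N /\ (forall i' : 'I_n, (i' < i)%N -> x i' = y i') /\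
                   (x i < y i)%N.

Lemma lex_minimal_before (S : ('I_n -> nat) -> Prop) j : (exists m, S m) -> (j <= n)%N ->
  exists m, S m /\ forall m', S m' -> ~ lex_lt_before j m' m.
Proof.
move=> exS; elim: j => [_|j IH jn].
  by case: exS => m Sm; exists m; split => // m' _ [i []].
have [m [Sm Hm]] := IH (ltnW jn).
pose jj : 'I_n := Ordinal jn.
pose P v := exists m', S m' /\ (forall i : 'I_n, (i < j)%N -> m' i = m i) /\ m' jj = v.
have [v [[m1 [Sm1 [Am1 Em1]]] Hv]] : exists v, P v /\ forall w, P w -> (v <= w)%N.
  by apply: nat_minimal; exists (m jj); exists m.
exists m1; split => // m' Sm' [i [ij [Ag Lt]]].
move: ij; rewrite ltnS leq_eqVlt => /orP[/eqP ij|ij].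
  have eij : i = jj by apply: val_inj.
  have Pm' : P (m' jj) by exists m'; do 2 split => //; move=> i' i'j; rewrite Ag ?ij // Am1.
  by have := Hv _ Pm'; rewrite -Em1 -eij leqNgt Lt.
apply: (Hm m' Sm'); exists i; split => //; split; last by rewrite -(Am1 i ij).
by move=> i' i'i; rewrite Ag // Am1 //; apply: ltn_trans i'i ij.
Qed.

Lemma lex_minimal (S : ('I_n -> nat) -> Prop) : (exists m, S m) ->
  exists m, S m /\ forall m', S m' -> ~ lex_lt m' m.
Proof.
move=> exS; have [m [Sm Hm]] := lex_minimal_before exS (leqnn n).
by exists m; split => // m' Sm' [j [Hj Lj]]; apply: (Hm m' Sm'); exists j.
Qed.

Lemma lex_lt_total (x y : 'I_n -> nat) : (exists i, x i != y i) ->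
  lex_lt x y \/ lex_lt y x.
Proof.
move=> [i0 H0].
have [v [[i [vi Hi]] Hv]] : exists v, (exists i : 'I_n, nat_of_ord i = v /\ x i != y i) /\
    forall w, (exists i : 'I_n, nat_of_ord i = w /\ x i != y i) -> (v <= w)%N.
  by apply: nat_minimal; exists i0, i0.
have Ag (i' : 'I_n) : (i' < i)%N -> x i' = y i'.
  move=> i'i; apply/eqP; apply: contraT => ne.
  by have := Hv i' (ex_intro _ i' (conj erefl ne)); rewrite -vi leqNgt i'i.
case: (ltngtP (x i) (y i)) => [lt|gt|eq]; first by left; exists i.
  by right; exists i; split => // i' i'i; rewrite Ag.
by rewrite eq eqxx in Hi.
Qed.

Lemma lex_ltD2r (x y c : 'I_n -> nat) :
  lex_lt (fun i => x i + c i)%N (fun i => y i + c i)%N <-> lex_lt x y.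
Proof.
split=> -[j [Ag Lt]]; exists j; rewrite ltn_add2r in Lt *; split => // i ij.
  by apply/eqP; rewrite -(eqn_add2r (c i)) Ag.
by rewrite Ag.
Qed.

Lemma eq_lex_lt (x y x' y' : 'I_n -> nat) : x =1 x' -> y =1 y' ->
  lex_lt x y -> lex_lt x' y'.
Proof.
by move=> ex ey [j [Ag Lt]]; exists j; rewrite -ex -ey; split => // i /Ag; rewrite ex ey.
Qed.

End Lex.

Section LexLeast.
Variables (k : fieldType) (n : nat) (f : pseries k n) (mu : {ffun 'I_n -> nat}).
Hypothesis mu_least : forall m : {ffun 'I_n -> nat}, f m != 0 -> ~ lex_lt m mu.

(* x^mu is the lex-least monomial of f, so a monomial x^a x^m of x^a f equal to
   x^a0 x^mu has a <= a0 lexicographically. *)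
Lemma lex_least_triangular (a a0 : 'I_n -> nat) (m : {ffun 'I_n -> nat}) :
  f m != 0 -> (forall t, a t + m t = a0 t + mu t)%N -> a =1 a0 \/ lex_lt a a0.
Proof.
move=> fm E; case: (pselect (exists t, m t != mu t)) => [ne|]; last first.
  move/forallNP => eqm; left => t; apply/eqP; rewrite -(eqn_add2r (m t)) E.
  by move/negP/negbNE/eqP: (eqm t) => ->.
case: (lex_lt_total ne) => [/(mu_least fm)//|lt]; right.
apply/(lex_ltD2r _ _ mu)/(eq_lex_lt _ _ (iffRL (lex_ltD2r _ _ a) lt)) => t;
  by rewrite addnC ?E.
Qed.

End LexLeast.

Lemma subn_exp_leq (q d n : nat) : (q ^ n - (q - d) ^ n <= n * d * q ^ n.-1)%N.
Proof.
rewrite subn_exp -mulnA mulnCA; apply: leq_mul; first lia.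
rewrite -[X in (_ <= X * _)%N]card_ord -sum_nat_const; apply: leq_sum => i _.
have le_i : (i <= n.-1)%N by have := ltn_ord i; lia.
have le_pow : ((q - d) ^ i <= q ^ i)%N.
  by case: (nat_of_ord i) => [//|j]; rewrite leq_exp2r ?leq_subr.
by rewrite -{2}(subnK le_i) expnD leq_mul.
Qed.

Section LowRows.
Variables (k : fieldType) (n q : nat) (f : pseries k n) (mu : {ffun 'I_n -> nat}).
Hypothesis fmu : f mu != 0.
Hypothesis mu_least : forall m : {ffun 'I_n -> nat}, f m != 0 -> ~ lex_lt m mu.
Let deg := (\sum_(t : 'I_n) mu t)%N.
Local Notation T := (trunc_mon n q).
Local Notation W := (trunc_mon n (q - deg)).

Lemma mu_leq_deg t : (mu t <= deg)%N.
Proof. by rewrite /deg (bigD1 t) //= leq_addr. Qed.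

Definition low_mon (w : W) : T := [ffun t => widen_ord (leq_subr deg q) (w t)].

Lemma low_mon_inj : injective low_mon.
Proof.
move=> w w' /ffunP E; apply: trunc_mon_inj => t.
by have := congr1 val (E t); rewrite !ffunE.
Qed.

(* The rows of the multiplication matrix indexed by the monomials x^a with
   a_t < q - deg: they contain the full product x^a x^mu. *)
Definition low_rows_mx : 'M[k]_(#|W|, #|T|) :=
  rowsub (fun j => enum_rank (low_mon (mon_of j))) (frob_mx f q).

Lemma frob_mx_lex_below (a a0 b : T) : (forall t, b t = a0 t + mu t :> nat)%N ->
  frob_mx f q (enum_rank a) (enum_rank b) != 0 ->
  a = a0 \/ lex_lt (fun t => a t) (fun t => a0 t).
Proof.
move=> bE; rewrite frob_mx_monmx monmxE !mon_ofK.
case: ifP => [/forallP le fm|]; last by rewrite eqxx.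
have E t : (a t + [ffun t => (b t - a t)%N] t = (a0 t : nat) + mu t)%N.
  by rewrite ffunE -bE subnKC.
by case: (lex_least_triangular mu_least fm E) => [eqa|]; [left; apply: trunc_mon_inj | right].
Qed.

Lemma low_rows_mx_free : row_free low_rows_mx.
Proof.
(* For the lex-least x^a0 with u_a0 != 0, the only contribution to the entry of
   u *m low_rows_mx at x^(a0 + mu) is u_a0 f_mu. *)
apply: inj_row_free => u uA; apply/rowP => j1; rewrite mxE; apply/eqP; apply: contraT => nz1.
pose S (m : 'I_n -> nat) := exists j, u 0 j != 0 /\ m =1 (fun t => low_mon (mon_of j) t : nat).
have [m0 [[j0 [nz0 E0]] min0]] :=
  lex_minimal (ex_intro S _ (ex_intro _ j1 (conj nz1 (frefl _)))).
set a0 := low_mon (mon_of j0).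
have bd t : (a0 t + mu t < q)%N.
  by have := ltn_ord (mon_of j0 t); have := mu_leq_deg t; rewrite /a0 ffunE /=; lia.
pose b0 : T := [ffun t => Ordinal (bd t)].
have b0E t : (b0 t = a0 t + mu t :> nat)%N by rewrite ffunE.
have := congr1 (fun v : 'rV[k]_#|T| => v 0 (enum_rank b0)) uA.
rewrite /= !mxE (bigD1 j0) //= big1 ?addr0.
  rewrite mxE frob_mx_monmx monmxE !mon_ofK.
  rewrite (_ : [forall t, _] = true); last by apply/forallP => t; rewrite b0E leq_addr.
  rewrite (_ : [ffun t => _] = mu); last by apply/ffunP => t; rewrite ffunE b0E addKn.
  by move/eqP; rewrite mulf_eq0 (negbTE nz0) (negbTE fmu).
move=> j jj0; rewrite mxE.
case: (eqVneq (u 0 j) 0) => [->|nzj]; first by rewrite mul0r.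
case: (eqVneq (frob_mx f q (enum_rank (low_mon (mon_of j))) (enum_rank b0)) 0) => [->|nz];
  first by rewrite mulr0.
case: (frob_mx_lex_below b0E nz) => [/low_mon_inj/enum_val_inj E|lt].
  by rewrite E eqxx in jj0.
by case: (min0 (fun t => low_mon (mon_of j) t)); [exists j | apply: eq_lex_lt lt => t].
Qed.

Lemma mxrank_frob_mx_ge : ((q - deg) ^ n <= \rank (frob_mx f q))%N.
Proof.
have rk_low : \rank low_rows_mx = ((q - deg) ^ n)%N.
  by rewrite (eqP low_rows_mx_free) card_trunc_mon.
by rewrite -rk_low mxrankS // rowsub_sub.
Qed.

Lemma hk_length_le : (hk_length f q <= n * deg * q ^ n.-1)%N.
Proof.
apply: leq_trans (subn_exp_leq q deg n); rewrite /hk_length {1}card_trunc_mon.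
exact/leq_sub2l/mxrank_frob_mx_ge.
Qed.

End LowRows.

Section GenericRank.
Variables (k : fieldType) (m N : nat).

Lemma mxrank_minor (A : 'M[k]_(m, N)) r (f : 'I_r -> 'I_m) (g : 'I_r -> 'I_N) :
  (\rank (\matrix_(i, j) A (f i) (g j)) <= \rank A)%N.
Proof.
have -> : \matrix_(i, j) A (f i) (g j) = rowsub f A *m \matrix_(l, j) ((l == g j)%:R : k).
  apply/matrixP => i j; rewrite !mxE (bigD1 (g j)) //= !mxE eqxx mulr1 big1 ?addr0 //.
  by move=> l /negbTE lg; rewrite mxE lg mulr0.
by apply: leq_trans (mxrankM_maxl _ _) _; apply/mxrankS/rowsub_sub.
Qed.

Lemma exists_unit_minor (A : 'M[k]_(m, N)) :
  exists (f : 'I_(\rank A) -> 'I_m) (g : 'I_(\rank A) -> 'I_N),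
    \matrix_(i, j) A (f i) (g j) \in unitmx.
Proof.
pose f := maxrankfun A.
have rk_f : \rank (rowsub f A) = \rank A by apply/eqP/maxrowsub_free.
have full_f : row_full (rowsub f A)^T by rewrite /row_full mxrank_tr rk_f.
exists f, (fullrankfun full_f); rewrite -unitmx_tr.
have -> : (\matrix_(i, j) A (f i) (fullrankfun full_f j))^T =
          rowsub (fullrankfun full_f) (rowsub f A)^T by apply/matrixP => i j; rewrite !mxE.
exact: fullrowsub_unit.
Qed.

(* P is the determinant of a maximal nonsingular minor of A, taken in A + 'X B. *)
Lemma mxrank_add_scale_generic (A B : 'M[k]_(m, N)) : exists P : {poly k}, P != 0 /\
  forall a, ~~ root P a -> (\rank A <= \rank (A + a *: B)%R)%N.
Proof.
have [f [g unitA]] := exists_unit_minor A.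
pose Mp := \matrix_(i, j) ((A (f i) (g j))%:P + 'X * (B (f i) (g j))%:P).
have Mp_eval a : (\det Mp).[a] = \det (\matrix_(i, j) (A + a *: B) (f i) (g j)).
  rewrite -horner_evalE -det_map_mx; congr (\det _); apply/matrixP => i j.
  rewrite !mxE; change (((A (f i) (g j))%:P + 'X * (B (f i) (g j))%:P).[a] =
                        A (f i) (g j) + a * B (f i) (g j)).
  by rewrite hornerD hornerM hornerX !hornerC mulrC.
exists (\det Mp); split.
  apply: contraTneq unitA => P0; rewrite unitmxE unitfE negbK.
  have := Mp_eval 0; rewrite P0 horner0 => ->.
  by apply/eqP; congr (\det _); apply/matrixP => i j; rewrite !mxE mul0r addr0.
move=> a Pa; have : \matrix_(i, j) (A + a *: B) (f i) (g j) \in unitmx.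
  by rewrite unitmxE unitfE -Mp_eval.
by move/mxrank_unit => rkM; rewrite -[X in (X <= _)%N]rkM; apply: mxrank_minor.
Qed.

End GenericRank.

Lemma frob_mx_add_scale (k : fieldType) n (f g : pseries k n) a q :
  frob_mx (ps_add_scale f g a) q = frob_mx f q + a *: frob_mx g q.
Proof. by apply/matrixP => i j; rewrite !mxE /=; case: ifP; rewrite ?mulr0 ?addr0. Qed.

Lemma hk_length_add_scale_generic (k : fieldType) n (f g : pseries k n) q :
  exists P : {poly k}, P != 0 /\
    forall a, ~~ root P a -> (hk_length (ps_add_scale f g a) q <= hk_length f q)%N.
Proof.
have [P [P0 rkP]] := mxrank_add_scale_generic (frob_mx f q) (frob_mx g q).
by exists P; split => // a Pa; rewrite /hk_length frob_mx_add_scale leq_sub2l ?rkP.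
Qed.

(* A nonzero polynomial vanishing on the complement would make k the countable
   union of the finite root sets of countably many nonzero polynomials. *)
Lemma zariski_dense_avoid_roots (k : closedFieldType) (P : nat -> {poly k}) :
  uncountable k -> (forall e, P e != 0) ->
  zariski_dense (fun a => forall e, ~~ root (P e) a).
Proof.
move=> unc P0 Q HQ; apply/eqP; apply: contraT => Q0; exfalso; apply: unc.
pose roots (R : {poly k}) := sval (closed_field_poly_normal R).
have rootsP R x : R != 0 -> root R x -> x \in roots R.
  move=> R0; rewrite {1}(svalP (closed_field_poly_normal R)) rootZ ?lead_coef_eq0 //.
  by rewrite root_prod_XsubC.
pose roots_seq e := if e is e'.+1 then roots (P e') else roots Q.
exists (fun m => if @unpickle (nat * nat)%type m is Some (e, i)
                then nth 0 (roots_seq e) i else 0).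
move=> x; have [e xe] : exists e, x \in roots_seq e.
  case: (pselect (forall e, ~~ root (P e) x)) => [/HQ|/existsNP[e /negP/negbNE]].
    by exists 0%N; apply: rootsP.
  by exists e.+1; apply: rootsP.
by exists (pickle (e, index x (roots_seq e))); rewrite pickleK nth_index.
Qed.

Lemma lex_least_support (k : fieldType) n (f : pseries k n) : (exists m, f m != 0) ->
  exists mu, f mu != 0 /\ forall m, f m != 0 -> ~ lex_lt m mu.
Proof.
move=> [m0 fm0].
have [h0 [[mu [fmu Emu]] mu_min]] := lex_minimal
  (ex_intro (fun h => exists mu : {ffun 'I_n -> nat}, f mu != 0 /\ h =1 mu) _
            (ex_intro _ m0 (conj fm0 (frefl _)))).
exists mu; split => // m fm lt; apply: (mu_min m); first by exists m.
exact: eq_lex_lt lt.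
Qed.

Lemma pseries_nonunit_dim_gt0 (k : fieldType) n (f : pseries k n) :
  (exists m, f m != 0) -> ps_const f = 0 -> (0 < n)%N.
Proof.
rewrite /ps_const; case: n f => [|//] f [m fm] f0; move: fm.
by rewrite (_ : m = [ffun _ => 0%N]) ?f0 ?eqxx //; apply/ffunP => -[].
Qed.

Section HKSequence.
Variables (k : fieldType) (n p : nat).
Hypothesis pchar_p : p \in [pchar k].

Definition hk_seq (f : pseries k n) (e : nat) : Rdefinitions.R :=
  (hk_length f (p ^ e))%:R / ((p ^ e)%:R ^+ n.-1).

Lemma hk_denom_gt0 e : 0 < ((p ^ e)%:R ^+ n.-1 : Rdefinitions.R).
Proof. by rewrite exprn_gt0 // ltr0n expn_gt0 prime_gt0 // (pcharf_prime pchar_p). Qed.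

Lemma hk_seq_nondecreasing f : (0 < n)%N -> nondecreasing_seq (hk_seq f).
Proof.
move=> n0; apply/nondecreasing_seqP => e; have := hk_length_mulp pchar_p f (p ^ e) n0.
rewrite /hk_seq expnS natrM exprMn invfM mulrA ler_pM2r ?invr_gt0 ?hk_denom_gt0 //.
by rewrite ler_pdivlMr ?exprn_gt0 ?ltr0n ?prime_gt0 ?(pcharf_prime pchar_p) //
  -natrX -natrM ler_nat mulnC.
Qed.

Lemma hk_seq_cvg f : (0 < n)%N -> (exists m, f m != 0) -> cvgn (hk_seq f).
Proof.
move=> n0 /lex_least_support[mu [fmu mu_least]].
apply: nondecreasing_is_cvgn; first exact: hk_seq_nondecreasing.
exists (n * (\sum_(t < n) mu t))%:R => _ [e _ <-].
rewrite /hk_seq ler_pdivrMr ?hk_denom_gt0 // -natrX -natrM ler_nat.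
exact: hk_length_le.
Qed.

Lemma eHK_le_of_cvg (f1 f2 : pseries k n) : cvgn (hk_seq f2) ->
  (forall e, (hk_length f1 (p ^ e) <= hk_length f2 (p ^ e))%N) -> eHK p f1 <= eHK p f2.
Proof.
move=> cvg2 le12; have le_seq : forall e, hk_seq f1 e <= hk_seq f2 e.
  by move=> e; rewrite /hk_seq ler_pM2r ?invr_gt0 ?hk_denom_gt0 // ler_nat.
rewrite (_ : eHK p f1 = limn (hk_seq f1)) // (_ : eHK p f2 = limn (hk_seq f2)) //.
case: (pselect (cvgn (hk_seq f1))) => cvg1.
  by apply: ler_lim => //; apply: nearW.
(* A divergent sequence has the junk limit 0. *)
rewrite dvgP //; apply: limr_ge => //; apply: nearW => e.
by apply: divr_ge0; [exact: ler0n | exact/ltW/hk_denom_gt0].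
Qed.

End HKSequence.

Theorem theorem2p7 (k : closedFieldType) (p : nat) (n : nat)
  (f g : pseries k n) :
  uncountable k ->
  prime p -> p \in [pchar k] ->
  (* k[[x]]/(f) is an (n-1)-dimensional hypersurface: f nonzero, non-unit *)
  (exists m, f m != 0) -> ps_const f = 0 ->
  (exists m, g m != 0) -> ps_const g = 0 ->
  ~ (exists c : k, forall m, g m = c * f m) ->
  exists L : k -> Prop,
    zariski_dense L /\
    forall a : k, L a -> eHK p (ps_add_scale f g a) <= eHK p f.
Proof.
move=> unc _ pchar_p fnz f0 _ _ _.
have n0 := pseries_nonunit_dim_gt0 fnz f0.
have /choice[P PP] := fun e => hk_length_add_scale_generic f g (p ^ e).
exists (fun a => forall e, ~~ root (P e) a); split.
  by apply: zariski_dense_avoid_roots => // e; case: (PP e).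
move=> a Pa; apply: eHK_le_of_cvg => //; first exact: hk_seq_cvg.
by move=> e; case: (PP e) => _; apply.
Qed.
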